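(* Let $\phi$ be a continuous flow on a compact metric space $(X,d)$. Then $\phi$ is expansive if and only if every point of $X$ is uniformly-expansive.
   Context: A continuous flow is a continuous map $\phi:\mathbb{R}\times X\to X$, $\phi^t(x)=\phi(t,x)$, with $\phi^0=\mathrm{id}$, $\phi^{t+s}=\phi^s\circ\phi^t$; $O(x)=\{\phi^t(x):t\in\mathbb{R}\}$. A reparametrization is an increasing homeomorphism $h:\mathbb{R}\to\mathbb{R}$ with $h(0)=0$. $\phi$ is expansive if for every $\varepsilon>0$ there is $\delta>0$ such that whenever $x,y\in X$ and some reparametrization $h$ satisfy $d(\phi^t(x),\phi^{h(t)}(y))<\delta$ for all $t\in\mathbb{R}$, then $y=\phi^s(z)$ with $z\in O(x)$ and $|s|<\varepsilon$. A point $x$ is uniformly-expansive if there is a neighborhood $U$ of $x$ such that for every $\varepsilon>0$ there is $\delta>0$ such that whenever $y,z\in U$ and some reparametrization $h$ satisfies $d(\phi^t(y),\phi^{h(t)}(z))<\delta$ for all $t\in\mathbb{R}$, then $y=\phi^s(w)$ with $w\in O(z)$ and $|s|<\varepsilon$. *)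

From Stdlib Require Import Reals List.
Open Scope R_scope.

Definition is_metric {X : Type} (d : X -> X -> R) : Prop :=
  (forall x y, 0 <= d x y) /\
  (forall x y, d x y = 0 <-> x = y) /\
  (forall x y, d x y = d y x) /\
  (forall x y z, d x z <= d x y + d y z).

Definition metric_open {X : Type} (d : X -> X -> R) (U : X -> Prop) : Prop :=
  forall x, U x -> exists r, 0 < r /\ forall y, d x y < r -> U y.

Definition metric_compact {X : Type} (d : X -> X -> R) : Prop :=
  forall (I : Type) (U : I -> X -> Prop),
    (forall i, metric_open d (U i)) ->
    (forall x, exists i, U i x) ->
    exists l : list I, forall x, exists i, In i l /\ U i x.

Definition jointly_continuous {X : Type} (d : X -> X -> R) (phi : R -> X -> X) : Prop :=
  forall t x eps, 0 < eps -> exists delta, 0 < delta /\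
    forall s y, Rabs (s - t) < delta -> d x y < delta -> d (phi t x) (phi s y) < eps.

Definition continuous_flow {X : Type} (d : X -> X -> R) (phi : R -> X -> X) : Prop :=
  jointly_continuous d phi /\
  (forall x, phi 0 x = x) /\
  (forall t s x, phi (t + s) x = phi s (phi t x)).

Definition orbit {X : Type} (phi : R -> X -> X) (x : X) (z : X) : Prop :=
  exists t, z = phi t x.

Definition reparametrization (h : R -> R) : Prop :=
  (forall s t, s < t -> h s < h t) /\
  continuity h /\
  (forall u, exists t, h t = u) /\
  h 0 = 0.

Definition expansive {X : Type} (d : X -> X -> R) (phi : R -> X -> X) : Prop :=
  forall eps, 0 < eps -> exists delta, 0 < delta /\
    forall x y h, reparametrization h ->
      (forall t, d (phi t x) (phi (h t) y) < delta) ->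
      exists s z, orbit phi x z /\ y = phi s z /\ Rabs s < eps.

Definition uniformly_expansive_point {X : Type} (d : X -> X -> R)
    (phi : R -> X -> X) (x : X) : Prop :=
  exists U : X -> Prop, (exists r, 0 < r /\ forall y, d x y < r -> U y) /\
    forall eps, 0 < eps -> exists delta, 0 < delta /\
      forall y z h, U y -> U z -> reparametrization h ->
        (forall t, d (phi t y) (phi (h t) z) < delta) ->
        exists s w, orbit phi z w /\ y = phi s w /\ Rabs s < eps.

From Stdlib Require Import Reals Lra List.
Open Scope R_scope.

(* Because the point z in the conclusions may be any point of the orbit, the
   bound |s| < eps can always be met with s = 0: both notions only ask that
   delta-close reparametrized orbits be the same orbit, globally for
   expansiveness and on a ball for uniform expansiveness at a point.  Global
   constants restrict to balls; conversely, compactness gives finitely many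
   balls B(x_i, r_i) covering X such that B(x_i, 2 r_i) has a constant delta_i,
   and delta = min_i (delta_i, r_i) works everywhere, because orbits that stay
   delta-close start delta-close (h 0 = 0), hence in a common ball B(x_i, 2 r_i). *)

Lemma list_forall_exists_pos (A : Type) (P : A -> R -> Prop) (l : list A) :
  (forall a e e', 0 < e' <= e -> P a e -> P a e') ->
  (forall a, In a l -> exists e, 0 < e /\ P a e) ->
  exists e, 0 < e /\ forall a, In a l -> P a e.
Proof.
  intros Pmono Hl; induction l as [|a l IH].
  - exists 1; split; [lra | intros a []].
  - destruct IH as [e [e_pos He]]; [intros b Hb; apply Hl; now right|].
    destruct (Hl a (or_introl eq_refl)) as [ea [ea_pos Hea]].
    exists (Rmin e ea); split; [now apply Rmin_pos|].
    intros b [<- | Hb].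
    + apply (Pmono a ea); [split; [now apply Rmin_pos | apply Rmin_r] | exact Hea].
    + apply (Pmono b e); [split; [now apply Rmin_pos | apply Rmin_l] | now apply He].
Qed.

Definition ball {X : Type} (d : X -> X -> R) (x : X) (r : R) (y : X) : Prop :=
  d x y < r.

Lemma compact_finite_ball_cover {X : Type} (d : X -> X -> R) (Q : X -> R -> Prop) :
  is_metric d -> metric_compact d ->
  (forall x, exists r, 0 < r /\ Q x r) ->
  exists l : list (X * R),
    (forall i, In i l -> 0 < snd i /\ Q (fst i) (snd i)) /\
    forall y, exists i, In i l /\ ball d (fst i) (snd i) y.
Proof.
  intros (_ & d_eq0 & _ & d_tri) Hcomp HQ.
  set (I := {i : X * R | 0 < snd i /\ Q (fst i) (snd i)}).
  destruct (Hcomp I (fun i => ball d (fst (proj1_sig i)) (snd (proj1_sig i))))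
    as [l Hl].
  - intros [[x r] Hxr] y Hy; unfold ball in *; simpl in *.
    exists (r - d x y); split; [lra|].
    intros y' Hy'; pose proof (d_tri x y y'); lra.
  - intros x; destruct (HQ x) as [r Hr].
    exists (exist _ (x, r) Hr); unfold ball; simpl.
    assert (d x x = 0) by now apply d_eq0.
    lra.
  - exists (map (@proj1_sig _ _) l); split.
    + intros i Hi; apply in_map_iff in Hi as [[j Hj] [<- _]]; exact Hj.
    + intros y; destruct (Hl y) as [i [Hi Hy]].
      exists (proj1_sig i); split; [now apply in_map | exact Hy].
Qed.

Section Flow.
Variables (X : Type) (d : X -> X -> R) (phi : R -> X -> X).
Hypothesis phi_0 : forall x, phi 0 x = x.
Hypothesis phi_add : forall t s x, phi (t + s) x = phi s (phi t x).

Lemma orbit_sym x y : orbit phi x y -> orbit phi y x.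
Proof.
  intros [t ->]; exists (- t).
  now rewrite <- phi_add, Rplus_opp_r, phi_0.
Qed.

Lemma shifted_orbit_iff eps x y : 0 < eps ->
  (exists s z, orbit phi x z /\ y = phi s z /\ Rabs s < eps) <-> orbit phi x y.
Proof.
  intros eps_pos; split.
  - intros (s & z & [t ->] & -> & _); exists (t + s).
    now rewrite phi_add.
  - intros Hxy; exists 0, y; repeat split.
    + exact Hxy.
    + now rewrite phi_0.
    + rewrite Rabs_R0; exact eps_pos.
Qed.

Definition expansivity_constant_on (delta : R) (A : X -> Prop) : Prop :=
  forall y z h, A y -> A z -> reparametrization h ->
    (forall t, d (phi t y) (phi (h t) z) < delta) -> orbit phi y z.

Lemma expansivity_constant_on_mono delta delta' (A B : X -> Prop) :
  delta' <= delta -> (forall y, B y -> A y) ->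
  expansivity_constant_on delta A -> expansivity_constant_on delta' B.
Proof.
  intros Hdelta HBA Hexp y z h Hy Hz Hh Hclose.
  apply (Hexp y z h (HBA y Hy) (HBA z Hz) Hh).
  intros t; specialize (Hclose t); lra.
Qed.

Lemma expansive_iff_constant :
  expansive d phi <->
  exists delta, 0 < delta /\ expansivity_constant_on delta (fun _ => True).
Proof.
  split.
  - intros Hexp; destruct (Hexp 1 Rlt_0_1) as [delta [delta_pos Hdelta]].
    exists delta; split; [exact delta_pos|].
    intros y z h _ _ Hh Hclose.
    now apply (shifted_orbit_iff 1), (Hdelta y z h); [lra | |].
  - intros [delta [delta_pos Hdelta]] eps eps_pos.
    exists delta; split; [exact delta_pos|].
    intros y z h Hh Hclose.
    apply shifted_orbit_iff; [exact eps_pos|].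
    now apply (Hdelta y z h).
Qed.

Lemma uniformly_expansive_point_iff_constant x :
  uniformly_expansive_point d phi x <->
  exists r delta, 0 < r /\ 0 < delta /\
    expansivity_constant_on delta (ball d x r).
Proof.
  split.
  - intros (U & (r & r_pos & HU) & Hexp).
    destruct (Hexp 1 Rlt_0_1) as [delta [delta_pos Hdelta]].
    exists r, delta; repeat split; [exact r_pos | exact delta_pos|].
    intros y z h Hy Hz Hh Hclose.
    apply orbit_sym, (shifted_orbit_iff 1); [lra|].
    now apply (Hdelta y z h); [apply HU | apply HU | |].
  - intros (r & delta & r_pos & delta_pos & Hdelta).
    exists (ball d x r); split; [now exists r|].
    intros eps eps_pos; exists delta; split; [exact delta_pos|].
    intros y z h Hy Hz Hh Hclose.
    apply shifted_orbit_iff, orbit_sym; [exact eps_pos|].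
    now apply (Hdelta y z h).
Qed.

Lemma expansivity_constant_local_to_global :
  is_metric d -> metric_compact d ->
  (forall x, exists r delta, 0 < r /\ 0 < delta /\
     expansivity_constant_on delta (ball d x r)) ->
  exists delta, 0 < delta /\ expansivity_constant_on delta (fun _ => True).
Proof.
  intros Hmetric Hcomp Hlocal.
  destruct (compact_finite_ball_cover d
    (fun x r => exists delta, 0 < delta /\
       expansivity_constant_on delta (ball d x (2 * r))) Hmetric Hcomp)
    as [l [Hl Hcover]].
  { intros x; destruct (Hlocal x) as (r & delta & r_pos & delta_pos & Hdelta).
    exists (r / 2); split; [lra|].
    exists delta; split; [exact delta_pos|].
    now replace (2 * (r / 2)) with r by field. }
  destruct (list_forall_exists_pos (X * R)
    (fun i e => e <= snd i /\ expansivity_constant_on e (ball d (fst i) (2 * snd i)))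
    l) as [delta [delta_pos Hdelta]].
  { intros i e e' He' [Hei He]; split; [lra|].
    apply (expansivity_constant_on_mono e e' _ _ ltac:(lra) (fun _ Hy => Hy) He). }
  { intros i Hi; destruct (Hl i Hi) as [ri_pos (e & e_pos & He)].
    exists (Rmin e (snd i)); split; [now apply Rmin_pos|]; split; [apply Rmin_r|].
    exact (expansivity_constant_on_mono e _ _ _ (Rmin_l e (snd i)) (fun _ Hy => Hy) He). }
  exists delta; split; [exact delta_pos|].
  intros y z h _ _ Hh Hclose.
  destruct (Hcover y) as [i [Hi Hy]]; destruct (Hdelta i Hi) as [Hdi Hexp].
  assert (Hyz : d y z < delta).
  { specialize (Hclose 0); destruct Hh as (_ & _ & _ & h_0).
    now rewrite h_0, !phi_0 in Hclose. }
  destruct Hmetric as (d_nonneg & _ & _ & d_tri).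
  unfold ball in *; pose proof (d_tri (fst i) y z); pose proof (d_nonneg (fst i) y).
  apply (Hexp y z h); auto; lra.
Qed.

End Flow.

Theorem mainTheorem5 (X : Type) (d : X -> X -> R) (phi : R -> X -> X) :
  is_metric d -> metric_compact d -> continuous_flow d phi ->
  (expansive d phi <-> forall x : X, uniformly_expansive_point d phi x).
Proof.
  intros Hmetric Hcomp (_ & phi_0 & phi_add).
  rewrite (expansive_iff_constant X d phi phi_0 phi_add); split.
  - intros (delta & delta_pos & Hdelta) x.
    apply uniformly_expansive_point_iff_constant; auto.
    exists 1, delta; repeat split; [lra | exact delta_pos|].
    apply (expansivity_constant_on_mono X d phi delta delta (fun _ => True));
      [apply Rle_refl | auto | exact Hdelta].
  - intros Hue; apply expansivity_constant_local_to_global; auto.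
    intros x; now apply uniformly_expansive_point_iff_constant.
Qed.
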